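(* For a bounded distributive lattice $L$ the following are equivalent: (1) $L$ is isomorphic to $\Phi(K)$ for some bounded distributive lattice $K$; (2) the Priestley space $\mathcal{X}(L)$ is order-homeomorphic to $Y\times\underline{2}$ for some Priestley space $Y$.
   Context: All lattices are bounded distributive with $0\neq 1$. For a lattice $K$, $\Phi(K)=\{(a,b)\in K\times K: a\le b\}$ with coordinatewise order, a $(0,1)$-sublattice of $K\times K$. A Priestley space is a poset with a compact topology such that whenever $x\not\ge y$ there is a clopen down-set containing $x$ but not $y$. $\mathcal{X}(L)$ is the Priestley space of prime ideals of $L$ ordered by inclusion, with topology generated by the sets $X_a=\{I: a\notin I\}$ and their complements, $a\in L$. $\underline{2}$ is the two-element chain $\{0<1\}$ with the discrete topology; products carry the product topology and coordinatewise order. Order-homeomorphic means there is a homeomorphism that is an order-isomorphism. *)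

From HB Require Import structures.
From Stdlib Require List.
From mathcomp Require Import all_boot all_order.
Set Implicit Arguments. Unset Strict Implicit. Unset Printing Implicit Defensive.
Import Order.Theory.
Local Open Scope order_scope.

(* f : L -> K * K is a (0,1)-lattice isomorphism of L onto
   Phi(K) = {(a,b) | a <= b} with coordinatewise operations. *)
Definition iso_onto_Phi {d d' : Order.disp_t}
  (L : tbDistrLatticeType d) (K : tbDistrLatticeType d') (f : L -> K * K) : Prop :=
  injective f /\
  (forall x : L, (f x).1 <= (f x).2) /\
  (forall a b : K, a <= b -> exists x : L, f x = (a, b)) /\
  (forall x y : L, f (x `&` y) = ((f x).1 `&` (f y).1, (f x).2 `&` (f y).2)) /\
  (forall x y : L, f (x `|` y) = ((f x).1 `|` (f y).1, (f x).2 `|` (f y).2)) /\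
  f \bot = (\bot, \bot) /\
  f \top = (\top, \top).

Definition isomorphic_to_some_Phi {d : Order.disp_t} (L : tbDistrLatticeType d) : Prop :=
  exists (d' : Order.disp_t) (K : tbDistrLatticeType d'),
    (\bot != \top :> K) /\ exists f : L -> K * K, iso_onto_Phi f.

Definition is_topology (X : Type) (opn : (X -> Prop) -> Prop) : Prop :=
  [/\ (forall U V, opn U -> (forall x, U x <-> V x) -> opn V),
      opn (fun _ => True),
      (forall U V, opn U -> opn V -> opn (fun x => U x /\ V x)) &
      (forall F : (X -> Prop) -> Prop, (forall U, F U -> opn U) ->
         opn (fun x => exists U, F U /\ U x))].

Inductive generated (X : Type) (S : (X -> Prop) -> Prop) : (X -> Prop) -> Prop :=
  | gen_sub : forall U, S U -> generated S U
  | gen_full : generated S (fun _ => True)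
  | gen_inter : forall U V, generated S U -> generated S V ->
                generated S (fun x => U x /\ V x)
  | gen_union : forall F : (X -> Prop) -> Prop, (forall U, F U -> generated S U) ->
                generated S (fun x => exists U, F U /\ U x)
  | gen_ext : forall U V, generated S U -> (forall x, U x <-> V x) -> generated S V.

Definition compact (X : Type) (opn : (X -> Prop) -> Prop) : Prop :=
  forall F : (X -> Prop) -> Prop, (forall U, F U -> opn U) ->
    (forall x, exists U, F U /\ U x) ->
    exists s : seq (X -> Prop), (forall U, List.In U s -> F U) /\
                                (forall x, exists U, List.In U s /\ U x).

Definition is_partial_order (X : Type) (le : X -> X -> Prop) : Prop :=
  [/\ (forall x, le x x), (forall x y, le x y -> le y x -> x = y) &
      (forall x y z, le x y -> le y z -> le x z)].

Definition clopen (X : Type) (opn : (X -> Prop) -> Prop) (U : X -> Prop) : Prop :=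
  opn U /\ opn (fun x => ~ U x).

Definition down_set (X : Type) (le : X -> X -> Prop) (U : X -> Prop) : Prop :=
  forall x y, le y x -> U x -> U y.

Definition priestley_separation (X : Type) (le : X -> X -> Prop)
  (opn : (X -> Prop) -> Prop) : Prop :=
  forall x y, ~ le y x ->
    exists U, clopen opn U /\ down_set le U /\ U x /\ ~ U y.

Record PriestleySpace := {
  ps_car :> Type;
  ps_le : ps_car -> ps_car -> Prop;
  ps_open : (ps_car -> Prop) -> Prop;
  ps_order : is_partial_order ps_le;
  ps_top : is_topology ps_open;
  ps_compact : compact ps_open;
  ps_sep : priestley_separation ps_le ps_open }.

Definition order_homeomorphic (X : Type) (leX : X -> X -> Prop) (opX : (X -> Prop) -> Prop)
  (Z : Type) (leZ : Z -> Z -> Prop) (opZ : (Z -> Prop) -> Prop) : Prop :=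
  exists (f : X -> Z) (g : Z -> X),
    [/\ cancel f g, cancel g f,
        (forall x y, leX x y <-> leZ (f x) (f y)),
        (forall U, opZ U -> opX (fun x => U (f x))) &
        (forall U, opX U -> opZ (fun z => U (g z)))].

Definition prime_ideal {d : Order.disp_t} (L : tbDistrLatticeType d) (I : L -> Prop) : Prop :=
  [/\ I \bot,
      (forall a b, a <= b -> I b -> I a),
      (forall a b, I a -> I b -> I (a `|` b)),
      ~ I \top &
      (forall a b, I (a `&` b) -> I a \/ I b)].

Definition XL {d : Order.disp_t} (L : tbDistrLatticeType d) : Type :=
  {I : L -> Prop | prime_ideal I}.

Definition XL_le {d : Order.disp_t} (L : tbDistrLatticeType d) (I J : XL L) : Prop :=
  forall a, proj1_sig I a -> proj1_sig J a.

Definition XL_open {d : Order.disp_t} (L : tbDistrLatticeType d) : (XL L -> Prop) -> Prop :=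
  generated (fun U => exists a : L,
     U = (fun I : XL L => ~ proj1_sig I a) \/ U = (fun I : XL L => proj1_sig I a)).

(* 2 = {false < true}, discrete; product order and product topology *)
Definition prod2_le (Y : PriestleySpace) (p q : Y * bool) : Prop :=
  ps_le p.1 q.1 /\ (p.2 ==> q.2).

Definition prod2_open (Y : PriestleySpace) : (Y * bool -> Prop) -> Prop :=
  generated (fun W =>
    (exists U, ps_open U /\ W = (fun p : Y * bool => U p.1)) \/
    (exists V : bool -> Prop, W = (fun p : Y * bool => V p.2))).

(* Then:
   - (1) => (2): an isomorphism f : L ~ Phi(K) induces lattice maps
     K -> L (a |-> f^-1 (a, a)) and L -> K (the two coordinates), whose
     dual maps give the order-homeomorphism X(K) x 2 ~ X(L);
   - (2) => (1): given X(L) ~ Y x 2, the map sending x to the two slices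
     of the image of X_x is an isomorphism of L onto Phi(K), K being the
     lattice of clopen down-sets of Y. *)

From HB Require Import structures.
From mathcomp Require Import all_boot all_order.
From mathcomp Require Import boolp classical_sets.
Set Implicit Arguments. Unset Strict Implicit. Unset Printing Implicit Defensive.
Import Order.Theory.
Local Open Scope order_scope.

Local Notation pr := proj1_sig.

Section Topology.
Variables (X : Type) (op : (X -> Prop) -> Prop).
Hypothesis top : is_topology op.

Lemma top_ext (U V : X -> Prop) : op U -> (forall x, U x <-> V x) -> op V.
Proof. by case: top => H _ _ _; apply: H. Qed.

Lemma top_inter (U V : X -> Prop) : op U -> op V -> op (fun x => U x /\ V x).
Proof. by case: top => _ _ H _; apply: H. Qed.

Lemma top_union2 (U V : X -> Prop) : op U -> op V -> op (fun x => U x \/ V x).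
Proof.
case: top => _ _ _ Hun oU oV.
apply: top_ext (Hun (fun W => W = U \/ W = V) _) _; first by move=> W [->|->].
move=> x; split=> [[W [[->|->] Wx]]|[Ux|Vx]]; [by left|by right| |].
- by exists U; split; [left|].
- by exists V; split; [right|].
Qed.

Lemma top_const (P : Prop) : op (fun _ => P).
Proof.
case: top => _ Hfull _ Hun; case: (EM P) => [HP|nP].
- by apply: top_ext Hfull _.
- apply: top_ext (Hun (fun _ => False) (fun U (H : False) => match H with end)) _.
  by move=> x; split=> [[U []]|].
Qed.

Lemma top_bool_preimage (c : X -> bool) (V : bool -> Prop) :
  op (fun x => c x) -> op (fun x => ~~ c x) -> op (fun x => V (c x)).
Proof.
move=> oT oF; apply: top_ext (top_union2 (top_inter (top_const (V true)) oT)
                                       (top_inter (top_const (V false)) oF)) _.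
by move=> x; case: (c x); split=> [[[]|[]]|] //; [left|right].
Qed.

Lemma clopen_inter (U V : X -> Prop) :
  clopen op U -> clopen op V -> clopen op (fun x => U x /\ V x).
Proof.
move=> [oU cU] [oV cV]; split; first exact: top_inter.
apply: top_ext (top_union2 cU cV) _ => x.
by split=> [[nU|nV] []|/not_andP].
Qed.

Lemma clopen_union (U V : X -> Prop) :
  clopen op U -> clopen op V -> clopen op (fun x => U x \/ V x).
Proof.
move=> [oU cU] [oV cV]; split; first exact: top_union2.
by apply: top_ext (top_inter cU cV) _ => x; split=> [[nU nV] []|/not_orP].
Qed.

Lemma clopen_const (P : Prop) : clopen op (fun _ => P).
Proof. by split; apply: top_const. Qed.

End Topology.

Lemma generated_top (X : Type) (S : (X -> Prop) -> Prop) : is_topology (generated S).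
Proof.
split; [exact: gen_ext|exact: gen_full|exact: gen_inter|exact: gen_union].
Qed.

Lemma gen_preimage (X Z : Type) (S : (Z -> Prop) -> Prop) (op : (X -> Prop) -> Prop)
  (h : X -> Z) : is_topology op -> (forall V, S V -> op (fun x => V (h x))) ->
  forall U, generated S U -> op (fun x => U (h x)).
Proof.
move=> top HS U; elim=> {U}.
- by move=> U /HS.
- exact: (top_const top True).
- by move=> U V _ oU _ oV; apply: top_inter.
- move=> F _ oF; have [_ _ _ Hun] := top.
  pose G W := exists2 U, F U & W = fun x => U (h x).
  have oG : forall W, G W -> op W by move=> W [U FU ->]; apply: oF.
  apply: (top_ext top (Hun G oG)) => x.
  split=> [[W [[U FU ->] Ux]]|[U [FU Ux]]]; first by exists U.
  by exists (fun x => U (h x)); split=> //; exists U.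
- by move=> U V _ oU UV; apply: (top_ext top oU) => x; apply: UV.
Qed.

Lemma compact_indexed (X : Type) (op : (X -> Prop) -> Prop) (I : eqType)
  (U : X -> Prop) (S : I -> Prop) (V : I -> X -> Prop) :
  compact op -> op U -> (forall i, S i -> op (V i)) ->
  (forall x, U x \/ exists2 i, S i & V i x) ->
  exists2 s : seq I, (forall i, i \in s -> S i) &
    forall x, U x \/ exists2 i, i \in s & V i x.
Proof.
move=> cpt oU oV cov.
pose F W := W = U \/ exists2 i, S i & W = V i.
have [||t [tF tcov]] := cpt F.
- by move=> W [->|[i Si ->]] //; apply: oV.
- move=> x; case: (cov x) => [Ux|[i Si Vx]]; first by exists U; split=> //; left.
  by exists (V i); split=> //; right; exists i.
suff [s sS tU] : exists2 s : seq I, (forall i, i \in s -> S i) &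
    forall W, List.In W t -> W = U \/ exists2 i, i \in s & W = V i.
  exists s => // x; have [W [Wt Wx]] := tcov x.
  by case: (tU W Wt) => [WU|[i si WV]]; [left; rewrite -WU|right; exists i; rewrite // -WV].
elim: t tF {tcov} => [|W t IH] tF; first by exists [::].
have [s sS tU] := IH (fun W' Wt => tF W' (or_intror Wt)).
case: (tF W (or_introl erefl)) => [->|[i Si ->]].
- by exists s => // W' [<-|/tU]; [left|].
- exists (i :: s); first by move=> j; rewrite inE => /predU1P [->|/sS].
  move=> W' [<-|/tU [->|[j js ->]]]; [right; exists i|left|right; exists j] => //.
  + by rewrite inE eqxx.
  + by rewrite inE js orbT.
Qed.

Section Zorn.
Local Open Scope classical_set_scope.

Lemma zorn_above (T : Type) (G : set (set T)) (X0 : set T) :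
  (forall C : set (set T), C !=set0 -> C `<=` G -> total_on C subset ->
     G (\bigcup_(X in C) X)) ->
  G X0 -> exists M, [/\ G M, X0 `<=` M & forall N, G N -> M `<=` N -> N = M].
Proof.
move=> Gchain GX0.
have [|A [GA Amax]] := @Zorn_bigcup T (fun J => G (X0 `|` J)).
  move=> C CG Ctot; case: (EM (C !=set0)) => [[J CJ]|C0].
  - have -> : X0 `|` \bigcup_(X in C) X = \bigcup_(Y in [set X0 `|` X | X in C]) Y.
      apply/seteqP; split=> [t [X0t|[X CX Xt]]|t [_ [X CX <-] [X0t|Xt]]].
      + by exists (X0 `|` J); [exists J|left].
      + by exists (X0 `|` X); [exists X|right].
      + by left.
      + by right; exists X.
    apply: Gchain; first by exists (X0 `|` J); exists J.
    + by move=> _ [X CX <-]; apply: CG.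
    + move=> _ _ [X CX <-] [Y CY <-].
      by case: (Ctot X Y CX CY) => XY; [left|right]; apply: setUS.
  - have -> : \bigcup_(X in C) X = set0.
      by apply: bigcup0 => X CX; case: C0; exists X.
    by rewrite setU0.
exists (X0 `|` A); split; [exact: GA|exact: subsetUl|].
move=> N GN MN; have AN : A `<=` N by move=> t At; apply: MN; right.
have NA : N = A.
  apply: (@contra_notP _ (A `<` N)) => [nNA|/Amax []].
    by rewrite properEneq; split => //; apply/eqP => AN'; apply: nNA.
  by rewrite (_ : X0 `|` N = N) //; apply/setUidr => t X0t; apply: MN; left.
by apply/seteqP; split => // t Nt; rewrite NA in Nt; right.
Qed.

End Zorn.

Section Ideals.
Context {d : Order.disp_t} (L : tbDistrLatticeType d).
Implicit Types (a b x y : L).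

Definition ideal (I : L -> Prop) :=
  [/\ I \bot, (forall a b, a <= b -> I b -> I a) & (forall a b, I a -> I b -> I (a `|` b))].
Definition lfilter (F : L -> Prop) :=
  [/\ F \top, (forall a b, a <= b -> F a -> F b) & (forall a b, F a -> F b -> F (a `&` b))].

Lemma ideal_generated (A : L -> Prop) : ideal (fun x =>
  exists2 s : seq L, (forall a, a \in s -> A a) & x <= \join_(a <- s) a).
Proof.
split.
- by exists [::]; rewrite ?le0x.
- by move=> a b ab [s sA bs]; exists s => //; apply: le_trans bs.
- move=> a b [s sA ha] [t tA hb]; exists (s ++ t).
  + by move=> c; rewrite mem_cat => /orP [/sA|/tA].
  + by rewrite big_cat leU2.
Qed.

Lemma lfilter_generated (B : L -> Prop) : lfilter (fun x =>
  exists2 s : seq L, (forall b, b \in s -> B b) & \meet_(b <- s) b <= x).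
Proof.
split.
- by exists [::]; rewrite ?lex1.
- by move=> a b ab [s sB sa]; exists s => //; apply: le_trans ab.
- move=> a b [s sB ha] [t tB hb]; exists (s ++ t).
  + by move=> c; rewrite mem_cat => /orP [/sB|/tB].
  + by rewrite big_cat leI2.
Qed.

Lemma ideal_adjoin (M : L -> Prop) a :
  ideal M -> ideal (fun x => exists2 m, M m & x <= m `|` a).
Proof.
move=> [M0 Mdown Mjoin]; split.
- by exists \bot; rewrite ?le0x.
- by move=> x y xy [m Mm ym]; exists m => //; apply: le_trans ym.
- move=> x y [m Mm xm] [m' Mm' ym']; exists (m `|` m'); first exact: Mjoin.
  rewrite leUx (le_trans xm) ?(le_trans ym') //; apply: leU2 => //;
  by rewrite ?leUl ?leUr.
Qed.

Lemma ideal_chain_union (C : set (set L)) : (C !=set0)%classic ->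
  (forall I, C I -> ideal I) -> total_on C subset -> ideal (\bigcup_(I in C) I)%classic.
Proof.
move=> [I0 CI0] Cid Ctot; split.
- by exists I0 => //; case: (Cid I0 CI0).
- by move=> a b ab [I CI Ib]; exists I => //; case: (Cid I CI) => _ down _; apply: down ab Ib.
- move=> a b [I CI Ia] [J CJ Jb].
  case: (Ctot I J CI CJ) => [IJ|JI].
  + by exists J => //; case: (Cid J CJ) => _ _; apply=> //; apply: IJ.
  + by exists I => //; case: (Cid I CI) => _ _; apply=> //; apply: JI.
Qed.

(* An ideal M maximal among the ideals disjoint from a filter F is prime:
   if a, b \notin M, then m1 \/ a and m2 \/ b lie in F for some m1, m2 in M,
   and so does their meet, which is below (m1 \/ m2) \/ (a /\ b). *)
Lemma maximal_disjoint_prime (M F : L -> Prop) : ideal M -> lfilter F ->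
  (forall x, M x -> F x -> False) ->
  (forall N, ideal N -> (forall x, N x -> F x -> False) -> (forall x, M x -> N x) -> N = M) ->
  prime_ideal M.
Proof.
move=> Mid [Ftop Fup Fmeet] MF Mmax; have [M0 Mdown Mjoin] := Mid.
have adjoin a : ~ M a -> exists2 m, M m & F (m `|` a).
  move=> Ma; apply: contra_notP Ma => nF.
  have <- : (fun x => exists2 m, M m & x <= m `|` a) = M.
    apply: Mmax => [|x [m Mm xm] Fx|x Mx]; first exact: ideal_adjoin.
    - by apply: nF; exists m => //; apply: Fup Fx.
    - by exists x; rewrite ?leUl.
  by exists \bot; rewrite ?join0x.
split=> // [Mtop|a b Mab]; first exact: MF Mtop Ftop.
case: (EM (M a)) => [|Ma]; [by left|right]; case: (EM (M b)) => // Mb.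
have [m1 M1 F1] := adjoin a Ma; have [m2 M2 F2] := adjoin b Mb.
case: (MF ((m1 `|` m2) `|` (a `&` b))); first by apply: (Mjoin) => //; apply: (Mjoin).
apply: Fup (Fmeet _ _ F1 F2); rewrite joinIr lexI.
by apply/andP; split; [apply: leIxl|apply: leIxr]; apply: leU2; rewrite ?leUl ?leUr.
Qed.

Theorem prime_ideal_theorem (I F : L -> Prop) : ideal I -> lfilter F ->
  (forall x, I x -> F x -> False) ->
  exists P : XL L, (forall x, I x -> pr P x) /\ (forall x, pr P x -> ~ F x).
Proof.
move=> Iid Ffil IF.
pose G (J : set L) := ideal J /\ forall x, J x -> F x -> False.
have [||M [[Mid MF] IM Mmax]] := @zorn_above L G I; last 1 first.
- have Mprime : prime_ideal M.
    by apply: maximal_disjoint_prime Mid Ffil MF _ => N Nid NF; apply: Mmax.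
  by exists (exist _ M Mprime); split=> // x /MF.
- move=> C C0 CG Ctot; split.
    exact: ideal_chain_union C0 (fun J CJ => proj1 (CG J CJ)) Ctot.
  by move=> x [J /CG [_ JF] Jx]; apply: JF.
- by split.
Qed.

Corollary prime_separation x y : ~ x <= y -> exists P : XL L, pr P y /\ ~ pr P x.
Proof.
move=> xy.
have Iid : ideal (fun z => z <= y).
  by split=> [|a b ab|a b]; rewrite ?le0x ?leUx => //; [apply: le_trans|move=> -> ->].
have Ffil : lfilter (fun z => x <= z).
  by split=> [|a b ab xa|a b]; rewrite ?lex1 ?lexI => //; [apply: le_trans ab|move=> -> ->].
have [P [yP Px]] := prime_ideal_theorem Iid Ffil (fun z zy xz => xy (le_trans xz zy)).
by exists P; split; [apply: yP|move=> /Px; apply].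
Qed.

End Ideals.

Section Points.
Context {d : Order.disp_t} (L : tbDistrLatticeType d).
Implicit Types (a b x y : L) (P Q : XL L).

Lemma XL_ext P Q : (forall a, pr P a <-> pr Q a) -> P = Q.
Proof. by case: P Q => p hp [q hq] /= pq; apply: eq_exist; apply/funext => a; apply/propext. Qed.

Lemma pi_bot P : pr P \bot. Proof. by case: (proj2_sig P). Qed.
Lemma pi_top P : ~ pr P \top. Proof. by case: (proj2_sig P). Qed.
Lemma pi_down P a b : a <= b -> pr P b -> pr P a.
Proof. by case: (proj2_sig P) => _ + _ _ _; apply. Qed.

Lemma pi_join P a b : pr P (a `|` b) <-> pr P a /\ pr P b.
Proof.
split=> [Pab|[Pa Pb]]; first by split; apply: pi_down Pab; rewrite ?leUl ?leUr.
by case: (proj2_sig P) => _ _ + _ _; apply.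
Qed.

Lemma pi_meet P a b : pr P (a `&` b) <-> pr P a \/ pr P b.
Proof.
split=> [|[Pa|Pb]]; first by case: (proj2_sig P) => _ _ _ _; apply.
- by apply: pi_down Pa; rewrite leIl.
- by apply: pi_down Pb; rewrite leIr.
Qed.

Lemma pi_joins P (s : seq L) : pr P (\join_(a <- s) a) <-> forall a, a \in s -> pr P a.
Proof.
elim: s => [|x s IH]; first by rewrite big_nil; split=> // _; apply: pi_bot.
rewrite big_cons pi_join IH; split=> [[Px Ps] a|Hs].
- by rewrite inE => /predU1P [->|/Ps].
- by split=> [|a as_]; apply: Hs; rewrite inE ?eqxx ?as_ ?orbT.
Qed.

Lemma pi_meets P (s : seq L) : pr P (\meet_(a <- s) a) <-> exists2 a, a \in s & pr P a.
Proof.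
elim: s => [|x s IH]; first by rewrite big_nil; split=> [/pi_top|[]].
rewrite big_cons pi_meet IH; split=> [[Px|[a as_ Pa]]|[a]].
- by exists x; rewrite ?inE ?eqxx.
- by exists a; rewrite // inE as_ orbT.
- by rewrite inE => /predU1P [->|as_ Pa]; [left|right; exists a].
Qed.

Lemma prime_ideals_separate x y : (forall P, pr P x <-> pr P y) -> x = y.
Proof.
move=> xy; apply/le_anti/andP.
by split; apply: contrapT => /prime_separation [P [h]]; apply; apply/xy.
Qed.

End Points.

Lemma chain_seq_bound (T : eqType) (C : set (set T)) (s : seq T) :
  (C !=set0)%classic -> total_on C subset ->
  (forall p, p \in s -> exists2 X, C X & X p) -> exists2 X, C X & forall p, p \in s -> X p.
Proof.
move=> [X0 CX0] Ctot; elim: s => [|q s IH] Hs; first by exists X0.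
have [X CX Xs] := IH (fun p ps => Hs p (predU1r p q ps)).
have [Y CY Yq] := Hs q (mem_head q s).
case: (Ctot X Y CX CY) => [XY|YX].
- by exists Y => // p; rewrite inE => /predU1P [->|/Xs /XY].
- by exists X => // p; rewrite inE => /predU1P [->|/Xs]; [apply: YX|].
Qed.

Section Spectrum.
Context {d : Order.disp_t} (L : tbDistrLatticeType d).
Implicit Types (a b x y : L) (P Q : XL L).

Lemma open_outside a : XL_open (fun P => ~ pr P a).
Proof. by apply: gen_sub; exists a; left. Qed.

Lemma open_inside a : XL_open (fun P => pr P a).
Proof. by apply: gen_sub; exists a; right. Qed.

Lemma clopen_outside a : clopen (@XL_open d L) (fun P => ~ pr P a).
Proof.
split; first exact: open_outside.
by apply: (top_ext (generated_top _) (open_inside a)) => P; rewrite not_notP.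
Qed.

Definition basic a b P := ~ pr P a /\ pr P b.

Lemma XL_basis (U : XL L -> Prop) : XL_open U ->
  forall P, U P -> exists a b, basic a b P /\ forall Q, basic a b Q -> U Q.
Proof.
elim=> {U}.
- move=> U [a [->|->]] P HP.
  + by exists a, \bot; split=> [|Q []//]; split=> //; apply: pi_bot.
  + by exists \top, a; split=> [|Q []//]; split=> //; apply: pi_top.
- by move=> P _; exists \top, \bot; split=> //; split; [apply: pi_top|apply: pi_bot].
- move=> U V _ HU _ HV P [UP VP].
  have [a1 [b1 [[Pa1 Pb1] H1]]] := HU P UP.
  have [a2 [b2 [[Pa2 Pb2] H2]]] := HV P VP.
  exists (a1 `&` a2), (b1 `|` b2); split.
  + by split; [rewrite pi_meet; case|rewrite pi_join].
  + move=> Q [/pi_meet /not_orP [Qa1 Qa2] /pi_join [Qb1 Qb2]].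
    by split; [apply: H1|apply: H2].
- move=> F _ IH P [U [FU UP]].
  have [a [b [abP abU]]] := IH U FU P UP.
  by exists a, b; split=> // Q /abU QU; exists U.
- move=> U V _ IH UV P /UV /IH [a [b [abP abU]]].
  by exists a, b; split=> // Q /abU /UV.
Qed.

Definition finitely_covered (C : L * L -> Prop) :=
  exists2 s : seq (L * L), (forall p, p \in s -> C p) &
    forall P, exists2 p, p \in s & basic p.1 p.2 P.

(* Compactness for covers by subbasic sets, from the prime ideal theorem. *)
Lemma subbasic_compact (M : L * L -> Prop) :
  (forall P, (exists2 a, M (a, \bot) & ~ pr P a) \/ (exists2 b, M (\top, b) & pr P b)) ->
  finitely_covered M.
Proof.
move=> cov.
pose I := fun x => exists2 s : seq L, (forall a, a \in s -> M (a, \bot)) & x <= \join_(a <- s) a.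
pose F := fun x => exists2 s : seq L, (forall b, b \in s -> M (\top, b)) & \meet_(b <- s) b <= x.
case: (EM (exists x, I x /\ F x)) => [[x [[sa saM xsa] [sb sbM sbx]]]|disj].
  exists ([seq (a, \bot) | a <- sa] ++ [seq (\top, b) | b <- sb]).
    by move=> p; rewrite mem_cat => /orP [] /mapP [c cs ->]; [apply: saM|apply: sbM].
  move=> P; case: (EM (exists2 a, a \in sa & ~ pr P a)) => [[a asa Pa]|allP].
    exists (a, \bot); first by rewrite mem_cat map_f.
    by split=> //; apply: pi_bot.
  have /pi_meets [b bsb Pb] : pr P (\meet_(b <- sb) b).
    apply: pi_down (le_trans sbx xsa) _; apply/pi_joins => a asa.
    by apply: contrapT => Pa; apply: allP; exists a.
  exists (\top, b); first by rewrite mem_cat map_f ?orbT.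
  by split=> //; apply: pi_top.
have [P [IP PF]] := prime_ideal_theorem (ideal_generated _) (lfilter_generated _)
  (fun x Ix Fx => disj (ex_intro _ x (conj Ix Fx))).
case: (cov P) => [[a Ma Pa]|[b Mb Pb]].
- by case: Pa; apply: IP; exists [:: a]; rewrite ?big_seq1 // => c; rewrite inE => /eqP ->.
- by case: (PF b Pb); exists [:: b]; rewrite ?big_seq1 // => c; rewrite inE => /eqP ->.
Qed.

(* If (a, b) is in M and both M + (a, bot) and M + (top, b) are finitely
   covering, then so is M, since basic a bot and basic top b meet in basic a b. *)
Lemma finitely_covered_merge (M : L * L -> Prop) a b : M (a, b) ->
  finitely_covered (fun p => M p \/ p = (a, \bot)) ->
  finitely_covered (fun p => M p \/ p = (\top, b)) -> finitely_covered M.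
Proof.
move=> Mab [s1 s1M cov1] [s2 s2M cov2].
pose r q p := if p == q then (a, b) else p.
have rM q s : (forall p, p \in s -> M p \/ p = q) -> forall p, p \in map (r q) s -> M p.
  move=> sM _ /mapP [p ps ->]; rewrite /r; case: eqP => // /eqP nq.
  by case: (sM p ps) => // pq; rewrite pq eqxx in nq.
exists (map (r (a, \bot)) s1 ++ map (r (\top, b)) s2).
  by move=> p; rewrite mem_cat => /orP [/(rM _ _ s1M)|/(rM _ _ s2M)].
move=> P; have [q1 q1s P1] := cov1 P; have [q2 q2s P2] := cov2 P.
case: (eqVneq q1 (a, \bot)) => [E1|n1]; last first.
  by exists (r (a, \bot) q1); rewrite ?mem_cat ?map_f // /r (negbTE n1).
case: (eqVneq q2 (\top, b)) => [E2|n2]; last first.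
  by exists (r (\top, b) q2); rewrite ?mem_cat ?map_f ?orbT // /r (negbTE n2).
exists (r (a, \bot) q1); first by rewrite mem_cat map_f.
by move: P1 P2; rewrite /r E1 E2 eqxx => -[Pa _] [_ Pb].
Qed.

(* Alexander's argument: a cover of X(L) by basic sets has a finite
   subcover.  A maximal family without finite subcover (Zorn) would contain
   enough subbasic pairs to cover X(L), contradicting subbasic_compact. *)
Lemma basic_compact (C : L * L -> Prop) :
  (forall P, exists2 p, C p & basic p.1 p.2 P) -> finitely_covered C.
Proof.
move=> cov; apply: contrapT => Cbad.
have [||M [Mbad CM Mmax]] := @zorn_above (L * L) (fun S => ~ finitely_covered S) C => //.
  move=> K K0 Kbad Ktot [s sK scov].
  have [S KS Ss] := chain_seq_bound K0 Ktot sK.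
  by apply: (Kbad S KS); exists s.
have grow q : ~ M q -> finitely_covered (fun p => M p \/ p = q).
  move=> Mq; apply: contrapT => bad.
  by apply: Mq; rewrite -(Mmax _ bad) => [|p Mp]; [right|left].
apply: (Mbad); apply: subbasic_compact => P.
have [[a b] Cab [Pa Pb]] := cov P.
case: (EM (M (a, \bot))) => [Ma|Ma]; first by left; exists a.
case: (EM (M (\top, b))) => [Mb|Mb]; first by right; exists b.
by case: Mbad; apply: finitely_covered_merge (CM _ Cab) (grow _ Ma) (grow _ Mb).
Qed.

Lemma XL_compact : compact (@XL_open d L).
Proof.
move=> F oF cov.
pose C (p : L * L) := exists2 U, F U & forall Q, basic p.1 p.2 Q -> U Q.
have [s sC scov] : finitely_covered C.
  apply: basic_compact => P; have [U [FU UP]] := cov P.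
  have [a [b [abP abU]]] := XL_basis (oF U FU) UP.
  by exists (a, b) => //; exists U.
suff [t tF tU] : exists2 t : seq (XL L -> Prop), (forall U, List.In U t -> F U) &
    forall p, p \in s -> exists2 U, List.In U t & forall Q, basic p.1 p.2 Q -> U Q.
  exists t; split=> // P; have [p ps pP] := scov P.
  by have [U Ut UP] := tU p ps; exists U; split=> //; apply: UP.
elim: s sC {scov} => [|q s IH] sC; first by exists [::].
have [t tF tU] := IH (fun p ps => sC p (predU1r p q ps)).
have [U FU qU] := sC q (mem_head q s).
exists (U :: t); first by move=> V /= [<-|/tF].
move=> p; rewrite inE => /predU1P [->|/tU [V Vt pV]]; first by exists U; [left|].
by exists V; [right|].
Qed.

(* Inclusion of prime ideals is a partial order, and two prime ideals with
   Q not below P are separated by the clopen down-set X_a for a in Q \ P. *)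
Lemma XL_partial_order : is_partial_order (@XL_le d L).
Proof.
split.
- by move=> P a.
- by move=> P Q PQ QP; apply: XL_ext => a; split; [apply: PQ|apply: QP].
- by move=> P Q R PQ QR a /PQ /QR.
Qed.

Lemma XL_separation : priestley_separation (@XL_le d L) (@XL_open d L).
Proof.
move=> P Q QP; have [a Qa Pa] : exists2 a, pr Q a & ~ pr P a.
  by apply: contrapT => H; apply: QP => a Qa; apply: contrapT => Pa; apply: H; exists a.
exists (fun R => ~ pr R a); split; [exact: clopen_outside|split; last by split].
by move=> R S SR Ra Sa; apply: Ra; apply: SR.
Qed.

Definition XL_space : PriestleySpace :=
  {| ps_car := XL L; ps_le := @XL_le d L; ps_open := @XL_open d L;
     ps_order := XL_partial_order; ps_top := generated_top _;
     ps_compact := XL_compact; ps_sep := XL_separation |}.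

(* A point Q outside a clopen down-set D is separated from D by an element
   of Q: the sets X_a (a in Q) cover D, and their finite joins stay in Q. *)
Lemma clopen_down_separate (D : XL L -> Prop) Q :
  clopen (@XL_open d L) D -> down_set (@XL_le d L) D -> ~ D Q ->
  exists2 a, pr Q a & forall P, D P -> ~ pr P a.
Proof.
move=> [_ oDc] Ddown DQ.
have [||s sQ cov] := compact_indexed (S := pr Q) (V := fun a P => ~ pr P a) XL_compact oDc.
- by move=> a _; apply: open_outside.
- move=> P; case: (EM (D P)) => [DP|]; [right|by left].
  apply: contrapT => H; apply: DQ; apply: Ddown DP => a Qa.
  by apply: contrapT => Pa; apply: H; exists a.
exists (\join_(a <- s) a); first by apply/pi_joins.
move=> P DP /pi_joins Ps.
by case: (cov P) => [//|[a as_ Pa]]; apply: Pa; apply: Ps.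
Qed.

Lemma clopen_down_outside (D : XL L -> Prop) :
  clopen (@XL_open d L) D -> down_set (@XL_le d L) D ->
  exists x, forall P, D P <-> ~ pr P x.
Proof.
move=> Dclopen Ddown; have [oD _] := Dclopen.
have [||s sD cov] :=
  compact_indexed (S := fun a => forall P, D P -> ~ pr P a) (V := fun a P => pr P a)
    XL_compact oD.
- by move=> a _; apply: open_inside.
- move=> P; case: (EM (D P)) => [|DP]; [by left|right].
  by have [a Pa aD] := clopen_down_separate Dclopen Ddown DP; exists a.
exists (\meet_(a <- s) a) => P; split=> [DP /pi_meets [a /sD aD]|Ps]; first exact: aD.
by case: (cov P) => [//|[a as_ Pa]]; case: Ps; apply/pi_meets; exists a.
Qed.

End Spectrum.

Definition clopen_down (Y : PriestleySpace) (U : Y -> Prop) :=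
  clopen (@ps_open Y) U /\ down_set (@ps_le Y) U.
Definition CD (Y : PriestleySpace) := {U : Y -> Prop | clopen_down U}.

HB.instance Definition _ (Y : PriestleySpace) := gen_eqMixin (CD Y).
HB.instance Definition _ (Y : PriestleySpace) := gen_choiceMixin (CD Y).

Section ClopenDownLattice.
Variable Y : PriestleySpace.
Implicit Types (U V W : CD Y).

Lemma CD_ext U V : (forall y, pr U y <-> pr V y) -> U = V.
Proof. by case: U V => u hu [v hv] /= uv; apply: eq_exist; apply/funext => y; apply/propext. Qed.

Lemma clopen_down_meet U V : clopen_down (fun y => pr U y /\ pr V y).
Proof.
case: U V => u [uc ud] [v [vc vd]] /=; split; first exact: (clopen_inter (ps_top Y) uc vc).
by move=> y z zy [uy vy]; split; [apply: ud zy uy|apply: vd zy vy].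
Qed.

Lemma clopen_down_join U V : clopen_down (fun y => pr U y \/ pr V y).
Proof.
case: U V => u [uc ud] [v [vc vd]] /=; split; first exact: (clopen_union (ps_top Y) uc vc).
by move=> y z zy [uy|vy]; [left; apply: ud zy uy|right; apply: vd zy vy].
Qed.

Lemma clopen_down_const (P : Prop) : clopen_down (fun _ : Y => P).
Proof. by split=> //; apply: (clopen_const (ps_top Y)). Qed.

Definition cd_meet U V : CD Y := exist _ _ (clopen_down_meet U V).
Definition cd_join U V : CD Y := exist _ _ (clopen_down_join U V).
Definition cd_le U V : bool := `[< forall y, pr U y -> pr V y >].
Definition cd_lt U V : bool := (V != U) && cd_le U V.

Lemma cd_le_def U V : cd_le U V = (cd_meet U V == U).
Proof.
apply/asboolP/eqP => [UV|<- y []//].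
by apply: CD_ext => y /=; split=> [[]//|Uy]; split=> //; apply: UV.
Qed.

Lemma cd_lt_def U V : cd_lt U V = (V != U) && cd_le U V. Proof. by []. Qed.
Lemma cd_meetC : commutative cd_meet.
Proof. by move=> U V; apply: CD_ext => y /=; tauto. Qed.
Lemma cd_joinC : commutative cd_join.
Proof. by move=> U V; apply: CD_ext => y /=; tauto. Qed.
Lemma cd_meetA : associative cd_meet.
Proof. by move=> U V W; apply: CD_ext => y /=; tauto. Qed.
Lemma cd_joinA : associative cd_join.
Proof. by move=> U V W; apply: CD_ext => y /=; tauto. Qed.
Lemma cd_joinKI V U : cd_meet U (cd_join U V) = U.
Proof. by apply: CD_ext => y /=; tauto. Qed.
Lemma cd_meetKU V U : cd_join U (cd_meet U V) = U.
Proof. by apply: CD_ext => y /=; tauto. Qed.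
Lemma cd_meetUl : left_distributive cd_meet cd_join.
Proof. by move=> U V W; apply: CD_ext => y /=; tauto. Qed.
Lemma cd_meetxx : idempotent_op cd_meet.
Proof. by move=> U; apply: CD_ext => y /=; tauto. Qed.

End ClopenDownLattice.

Fact cd_display : Order.disp_t. Proof. exact: Order.Disp tt tt. Qed.

HB.instance Definition _ (Y : PriestleySpace) :=
  Order.isMeetJoinDistrLattice.Build cd_display (CD Y) (@cd_le_def Y) (@cd_lt_def Y)
    (@cd_meetC Y) (@cd_joinC Y) (@cd_meetA Y) (@cd_joinA Y) (@cd_joinKI Y) (@cd_meetKU Y)
    (@cd_meetUl Y) (@cd_meetxx Y).

Definition cd_bot (Y : PriestleySpace) : CD Y := exist _ _ (clopen_down_const Y False).
Definition cd_top (Y : PriestleySpace) : CD Y := exist _ _ (clopen_down_const Y True).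

Lemma cd_le0x (Y : PriestleySpace) (U : CD Y) : cd_bot Y <= U.
Proof. by apply/asboolP. Qed.
Lemma cd_lex1 (Y : PriestleySpace) (U : CD Y) : U <= cd_top Y.
Proof. by apply/asboolP. Qed.

HB.instance Definition _ (Y : PriestleySpace) :=
  Order.hasBottom.Build cd_display (CD Y) (@cd_le0x Y).
HB.instance Definition _ (Y : PriestleySpace) :=
  Order.hasTop.Build cd_display (CD Y) (@cd_lex1 Y).

Lemma CD_leE (Y : PriestleySpace) (U V : CD Y) : U <= V <-> forall y, pr U y -> pr V y.
Proof. by split=> /asboolP. Qed.

Section Comap.
Context {d d' : Order.disp_t} (M : tbDistrLatticeType d) (N : tbDistrLatticeType d').

Definition lattice_hom (g : M -> N) :=
  [/\ g \bot = \bot, g \top = \top,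
      (forall x y, g (x `&` y) = g x `&` g y) & (forall x y, g (x `|` y) = g x `|` g y)].

Variables (g : M -> N) (g_hom : lattice_hom g).

Lemma lattice_hom_mono x y : x <= y -> g x <= g y.
Proof. by case: g_hom => _ _ gI _ /meet_idPl xy; apply/meet_idPl; rewrite -gI xy. Qed.

(* The preimage of a prime ideal under a lattice homomorphism is prime, so
   g induces comap : X(N) -> X(M), which is continuous since the preimage
   of X_a is X_(g a). *)
Lemma comap_prime (Q : XL N) : prime_ideal (fun x => pr Q (g x)).
Proof.
case: g_hom => g0 g1 gI gU; split.
- by rewrite g0; apply: pi_bot.
- by move=> a b /lattice_hom_mono; apply: pi_down.
- by move=> a b Qa Qb; rewrite gU pi_join.
- by rewrite g1; apply: pi_top.
- by move=> a b; rewrite gI pi_meet.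
Qed.

Definition comap (Q : XL N) : XL M := exist _ _ (comap_prime Q).

Lemma comap_continuous (U : XL M -> Prop) : XL_open U -> XL_open (fun Q => U (comap Q)).
Proof.
apply: gen_preimage; first exact: generated_top.
by move=> V [a [->|->]]; [apply: open_outside (g a)|apply: open_inside (g a)].
Qed.

End Comap.

Section Product2.
Variable Y : PriestleySpace.

Lemma slice_open (W : Y * bool -> Prop) (b : bool) :
  prod2_open W -> ps_open (fun y : Y => W (y, b)).
Proof.
apply: (gen_preimage (h := fun y : Y => (y, b)) (ps_top Y)) => V [[U [oU ->]]|[B ->]] //.
exact: (top_const (ps_top Y) (B b)).
Qed.

Lemma open_from_slices (W : Y * bool -> Prop) :
  ps_open (fun y : Y => W (y, true)) -> ps_open (fun y : Y => W (y, false)) ->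
  prod2_open W.
Proof.
have piece b U : ps_open U -> prod2_open (fun p : Y * bool => U p.1 /\ p.2 = b).
  move=> oU; apply: gen_inter; first by apply: gen_sub; left; exists U.
  by apply: gen_sub; right; exists (fun c => c = b).
move=> oT oF; apply: (top_ext (generated_top _)
  (top_union2 (generated_top _) (piece true _ oT) (piece false _ oF))).
by move=> [y []] /=; split=> [[[]|[]]|] //; [left|right].
Qed.

End Product2.

Section PhiToProduct.
Context {d d' : Order.disp_t} (L : tbDistrLatticeType d) (K : tbDistrLatticeType d')
  (f : L -> K * K) (Hf : iso_onto_Phi f).

Let f_inj : injective f. Proof. by case: Hf. Qed.
Let f_le x : (f x).1 <= (f x).2. Proof. by case: Hf => _ [H _]. Qed.
Let f_onto a b : a <= b -> exists x, f x = (a, b).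
Proof. by case: Hf => _ [_ [H _]]; apply: H. Qed.
Let f_meet x y : f (x `&` y) = ((f x).1 `&` (f y).1, (f x).2 `&` (f y).2).
Proof. by case: Hf => _ [_ [_ [H _]]]. Qed.
Let f_join x y : f (x `|` y) = ((f x).1 `|` (f y).1, (f x).2 `|` (f y).2).
Proof. by case: Hf => _ [_ [_ [_ [H _]]]]. Qed.
Let f_bot : f \bot = (\bot, \bot). Proof. by case: Hf => _ [_ [_ [_ [_ [H _]]]]]. Qed.
Let f_top : f \top = (\top, \top). Proof. by case: Hf => _ [_ [_ [_ [_ [_ H]]]]]. Qed.

(* f reflects the order, since it is an injective meet-homomorphism. *)
Lemma f_le_inv x y : (f x).1 <= (f y).1 -> (f x).2 <= (f y).2 -> x <= y.
Proof.
move=> /meet_idPl h1 /meet_idPl h2; apply/meet_idPl; apply: f_inj.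
by rewrite f_meet h1 h2; case: (f x).
Qed.

Definition coord (b : bool) (x : L) : K := if b then (f x).1 else (f x).2.

Lemma coord_hom b : lattice_hom (coord b).
Proof. by rewrite /coord; split=> [||x y|x y]; rewrite ?f_bot ?f_top ?f_meet ?f_join; case: b. Qed.

(* The diagonal K -> L, a |-> f^-1 (a, a), is a lattice homomorphism, and
   e01 = f^-1 (bot, top) is the element that splits X(L) into two copies. *)
Definition diag (a : K) : L := sval (cid (f_onto (lexx a))).
Definition e01 : L := sval (cid (f_onto (le0x (\top : K)))).

Lemma f_diag a : f (diag a) = (a, a). Proof. by rewrite /diag; case: cid. Qed.
Lemma f_e01 : f e01 = (\bot, \top). Proof. by rewrite /e01; case: cid. Qed.

Lemma diag_hom : lattice_hom diag.
Proof.
by split=> [||a b|a b]; apply: f_inj; rewrite ?f_meet ?f_join !f_diag ?f_bot ?f_top.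
Qed.

Lemma diag_fst_le x : diag (f x).1 <= x.
Proof. by apply: f_le_inv; rewrite f_diag /= ?lexx ?f_le. Qed.
Lemma le_diag_fst_join x : x <= diag (f x).1 `|` e01.
Proof. by apply: f_le_inv; rewrite f_join f_diag f_e01 /= ?joinx0 ?joinx1 ?lexx ?lex1. Qed.
Lemma le_diag_snd x : x <= diag (f x).2.
Proof. by apply: f_le_inv; rewrite f_diag /= ?lexx ?f_le. Qed.
Lemma diag_snd_meet_le x : diag (f x).2 `&` e01 <= x.
Proof. by apply: f_le_inv; rewrite f_meet f_diag f_e01 /= ?meetx0 ?meetx1 ?lexx ?le0x. Qed.

Definition psi (p : XL K * bool) : XL L := comap (coord_hom p.2) p.1.
Definition phi (P : XL L) : XL K * bool := (comap diag_hom P, `[< pr P e01 >]).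

Lemma psiK : cancel phi psi.
Proof.
move=> P; apply: XL_ext => x /=; rewrite /coord.
case: asboolP => [Pe|nPe]; split.
- by move=> Pd; apply: (pi_down (le_diag_fst_join x)); rewrite pi_join.
- exact: pi_down (diag_fst_le x).
- exact: pi_down (le_diag_snd x).
- by move/(pi_down (diag_snd_meet_le x))/pi_meet => [].
Qed.

Lemma phiK : cancel psi phi.
Proof.
move=> [Q b]; congr pair.
  by apply: XL_ext => a /=; rewrite /coord f_diag; case: b.
rewrite /= /coord f_e01; case: b; apply/asboolP => /=; first exact: pi_bot.
exact: pi_top.
Qed.

Lemma psi_le p q : XL_le (psi p) (psi q) <-> prod2_le (Y := XL_space K) p q.
Proof.
case: p q => [Q b] [Q' b']; rewrite /prod2_le /XL_le /=; split.
- move=> H; split.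
    move=> a Qa; have := H (diag a); rewrite /coord f_diag.
    by case: b b' H Qa => [] [] //= _ Qa; apply.
  case: b b' H => [] [] //= H; have := H e01; rewrite /coord f_e01 /=.
  by move=> /(_ (pi_bot Q)) /pi_top.
- move=> [QQ' bb'] x; rewrite /coord.
  case: b b' bb' => [] [] //= _ Qx; apply: QQ' => //.
  exact: pi_down (f_le x) Qx.
Qed.

Lemma phi_le P P' : XL_le P P' <-> prod2_le (Y := XL_space K) (phi P) (phi P').
Proof. by rewrite -psi_le !psiK. Qed.

Lemma phi_continuous (U : XL_space K * bool -> Prop) :
  prod2_open U -> XL_open (fun P => U (phi P)).
Proof.
apply: gen_preimage; first exact: generated_top.
move=> V [[U0 [oU0 ->]]|[B ->]]; first exact: comap_continuous diag_hom _ oU0.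
apply: (top_bool_preimage (generated_top _)).
- by apply: (top_ext (generated_top _) (open_inside e01)) => P; split=> /asboolP.
- by apply: (top_ext (generated_top _) (open_outside e01)) => P; split=> /asboolPn.
Qed.

Lemma psi_continuous (U : XL L -> Prop) :
  XL_open U -> prod2_open (fun p : XL_space K * bool => U (psi p)).
Proof. by move=> oU; apply: open_from_slices; apply: (comap_continuous (coord_hom _)). Qed.

Theorem Phi_spectrum_product : exists Y : PriestleySpace,
  order_homeomorphic (@XL_le d L) (@XL_open d L) (@prod2_le Y) (@prod2_open Y).
Proof.
exists (XL_space K), phi, psi; split.
- exact: psiK.
- exact: phiK.
- exact: phi_le.
- exact: phi_continuous.
- exact: psi_continuous.
Qed.

End PhiToProduct.

Section ProductToPhi.
Context {d : Order.disp_t} (L : tbDistrLatticeType d) (Y : PriestleySpace)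
  (h : XL L -> Y * bool) (h' : Y * bool -> XL L) (hK : cancel h h') (h'K : cancel h' h)
  (h_le : forall P Q, XL_le P Q <-> prod2_le (h P) (h Q))
  (h_cont : forall U, prod2_open U -> XL_open (fun P => U (h P)))
  (h'_cont : forall U, XL_open U -> prod2_open (fun z => U (h' z))).

Lemma h'_le p q : XL_le (h' p) (h' q) <-> prod2_le p q.
Proof. by rewrite h_le !h'K. Qed.

Definition slice_outside (b : bool) (x : L) : Y -> Prop := fun y => ~ pr (h' (y, b)) x.

Lemma slice_outside_clopen_down b x : clopen_down (slice_outside b x).
Proof.
have [oX cX] := clopen_outside x; split; first split.
- exact: (slice_open b (h'_cont oX)).
- exact: (slice_open b (h'_cont cX)).
- move=> y z zy yx zx; apply: yx.
  have zy' : XL_le (h' (z, b)) (h' (y, b)) by apply/h'_le; split=> //; exact: implybb.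
  exact: zy' zx.
Qed.

Definition to_Phi (x : L) : CD Y * CD Y :=
  (exist _ _ (slice_outside_clopen_down true x), exist _ _ (slice_outside_clopen_down false x)).

(* to_Phi is injective because prime ideals separate elements of L, and
   each prime ideal is h' (y, b) for some (y, b). *)
Lemma to_Phi_inj : injective to_Phi.
Proof.
move=> x x' E; apply: prime_ideals_separate => P.
have E' b : slice_outside b x = slice_outside b x'.
  by case: b; [have := congr1 (fun p => pr p.1) E|have := congr1 (fun p => pr p.2) E].
have := congr1 (fun W => W (h P).1) (E' (h P).2); rewrite /slice_outside -surjective_pairing hK.
move=> Ex; split=> Px; apply: contrapT; [rewrite -Ex|rewrite Ex]; exact.
Qed.

(* The bottom copy of Y lies below the top copy, so the first slice is
   contained in the second. *)
Lemma to_Phi_le x : (to_Phi x).1 <= (to_Phi x).2.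
Proof.
apply/CD_leE => y /= yx Px; apply: yx.
have le : XL_le (h' (y, false)) (h' (y, true)).
  by apply/h'_le; split=> //; case: (ps_order Y).
exact: le Px.
Qed.

(* Surjectivity: for clopen down-sets A <= B of Y, the set equal to A on
   the top copy and to B on the bottom copy is a clopen down-set of Y x 2,
   hence corresponds to a clopen down-set of X(L), i.e. to some X_x. *)
Lemma to_Phi_onto A B : A <= B -> exists x, to_Phi x = (A, B).
Proof.
move=> /CD_leE AB.
pose W (p : Y * bool) := if p.2 then pr A p.1 else pr B p.1.
have [[oA cA] Adown] := proj2_sig A; have [[oB cB] Bdown] := proj2_sig B.
have [x Wx] : exists x, forall P, W (h P) <-> ~ pr P x.
  apply: clopen_down_outside.
    by split; [apply: (h_cont (U := W))|apply: (h_cont (U := fun p => ~ W p))];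
      apply: open_from_slices.
  move=> P Q /h_le; case: (h Q) => z c; case: (h P) => y b [/= zy cb].
  by case: b c cb => [] [] //= _; [apply: Adown zy|move=> /AB; apply: Bdown zy|apply: Bdown zy].
by exists x; congr pair; apply: CD_ext => y /=; rewrite /slice_outside -Wx h'K.
Qed.

(* to_Phi is an isomorphism onto Phi(CD Y): the lattice operations are
   preserved because prime ideals are prime. *)
Lemma to_Phi_iso : iso_onto_Phi to_Phi.
Proof.
split; [exact: to_Phi_inj|split; [exact: to_Phi_le|split; [exact: to_Phi_onto|]]].
split=> [x x'|].
  by congr pair; apply: CD_ext => y /=; rewrite /slice_outside pi_meet not_orP.
split=> [x x'|].
  by congr pair; apply: CD_ext => y /=; rewrite /slice_outside pi_join not_andP.
split; congr pair; apply: CD_ext => y /=; rewrite /slice_outside.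
- by split=> [/(_ (pi_bot _))|].
- by split=> [/(_ (pi_bot _))|].
- by split=> // _; apply: pi_top.
- by split=> // _; apply: pi_top.
Qed.

(* Direction (2) => (1): L is isomorphic to Phi of the lattice of clopen
   down-sets of Y, which is nontrivial because X(L) is nonempty. *)
Theorem product_Phi : \bot != \top :> L -> isomorphic_to_some_Phi L.
Proof.
move=> hL; exists cd_display, (CD Y); split; last by exists to_Phi; exact: to_Phi_iso.
apply/eqP => E; have [P [_ Ptop]] : exists P : XL L, pr P \bot /\ ~ pr P \top.
  by apply: prime_separation => top_bot; move: hL; rewrite eq_le le0x top_bot.
by have := congr1 (fun U : CD Y => pr U (h P).1) E => /= ->.
Qed.

End ProductToPhi.

Theorem mainTheorem6 (d : Order.disp_t) (L : tbDistrLatticeType d)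
  (hL : \bot != \top :> L) :
  isomorphic_to_some_Phi L <->
  exists Y : PriestleySpace,
    order_homeomorphic (@XL_le d L) (@XL_open d L) (@prod2_le Y) (@prod2_open Y).
Proof.
split.
- by move=> [d' [K [_ [f Hf]]]]; apply: Phi_spectrum_product Hf.
- move=> [Y [h [h' [hK h'K h_le h_cont h'_cont]]]].
  exact: (product_Phi hK h'K h_le h_cont h'_cont hL).
Qed.
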